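(* Let $d\ge 1$ and $L\ge 1$ be integers, and for $1\le i,j\le d$ and $0\le \ell\le L$ let $P_i(x,u)$ and $Q_{i,j,\ell}(x,u)$ be polynomials in $x,u$ with nonnegative coefficients. Let $F_1(x,u),\dots,F_d(x,u)$ be formal power series in $x,u$ forming a solution of the positive linear system of catalytic equations \[ F_i(x,u) = P_i(x,u) + x\sum_{j=1}^d\sum_{\ell=0}^L Q_{i,j,\ell}(x,u)\,\Delta^\ell F_j(x,u),\qquad 1\le i\le d, \] and write $F_i(x,u)=\sum_{k\ge0}F_{i;k}(x)u^k$. Then for every $1\le i\le d$ and every $k\ge 0$ the power series $F_{i;k}(x)$ corresponds to a finite grammar.
   Context: For a power series $G(x,u)=\sum_{k\ge0}G_k(x)u^k$ and an integer $\ell\ge1$, the $\ell$-th difference is $\Delta^\ell G(x,u)=\bigl(G(x,u)-G_0(x)-G_1(x)u-\cdots-G_{\ell-1}(x)u^{\ell-1}\bigr)/u^\ell=\sum_{k\ge0}G_{k+\ell}(x)u^k$, and $\Delta^0G=G$. A power series $F(x)$ is said to correspond to a finite grammar (or to satisfy a positive polynomial system) if there exist $m\ge1$ and polynomials $R_1,\dots,R_m$ in $x,y_1,\dots,y_m$ with nonnegative coefficients such that the system $y_r=R_r(x,y_1,\dots,y_m)$, $1\le r\le m$, has a unique power series solution $(y_1(x),\dots,y_m(x))$ and $F(x)=y_1(x)$. *)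

From HB Require Import structures.
From mathcomp Require Import all_boot all_order all_algebra.
From mathcomp Require Import mpoly.
Set Implicit Arguments. Unset Strict Implicit. Unset Printing Implicit Defensive.
Import Order.TTheory GRing.Theory Num.Theory.
Local Open Scope ring_scope.

Section Series.
Variable R : realFieldType.

(** Univariate formal power series in x: [f n] = coefficient of x^n. *)
Definition ser := nat -> R.

Definition ser_one : ser := fun n => (n == 0%N)%:R.
Definition ser_X : ser := fun n => (n == 1%N)%:R.
Definition ser_mul (f g : ser) : ser :=
  fun n => \sum_(i < n.+1) f i * g (n - i)%N.
Definition ser_pow (f : ser) (k : nat) : ser := iter k (ser_mul f) ser_one.

Definition ser_monom (n : nat) (mo : 'X_{1..n}) (v : 'I_n -> ser) : ser :=
  foldr (fun i acc => ser_mul (ser_pow (v i) (mo i)) acc) ser_one (enum 'I_n).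

Definition ser_eval (n : nat) (p : {mpoly R[n]}) (v : 'I_n -> ser) : ser :=
  fun k => \sum_(mo <- msupp p) p@_mo * ser_monom mo v k.

Definition sys_vars (m : nat) (y : 'I_m -> ser) : 'I_m.+1 -> ser :=
  fun i => match unlift ord0 i with None => ser_X | Some j => y j end.

(** F corresponds to a finite grammar (satisfies a positive polynomial
    system): there are m >= 1 (written m.+1) and polynomials R_r in
    x, y_1..y_m with nonnegative coefficients such that the system
    y_r = R_r(x, y) has a unique power series solution, whose first
    component is F. *)
Definition finite_grammar (F : ser) : Prop :=
  exists (m : nat) (Rs : 'I_m.+1 -> {mpoly R[m.+2]}),
    (forall r mo, 0 <= (Rs r)@_mo) /\
    exists y : 'I_m.+1 -> ser,
      (forall y' : 'I_m.+1 -> ser,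
          (forall r, y' r = ser_eval (Rs r) (sys_vars y')) <-> y' = y)
      /\ F = y ord0.

(** Bivariate formal power series in x, u: [F n k] = coefficient of x^n u^k. *)
Definition ser2 := nat -> nat -> R.

(** A polynomial in x, u as element of {poly {poly R}}: outer variable u,
    inner variable x. *)
Definition poly2_ser (p : {poly {poly R}}) : ser2 := fun n k => (p`_k)`_n.

Definition poly2_nonneg (p : {poly {poly R}}) : Prop :=
  forall n k, 0 <= (p`_k)`_n.

Definition ser2_mul (A B : ser2) : ser2 :=
  fun n k => \sum_(a < n.+1) \sum_(b < k.+1) A a b * B (n - a)%N (k - b)%N.

Definition Delta (l : nat) (G : ser2) : ser2 := fun n k => G n (k + l)%N.

Definition ser2_xmul (G : ser2) : ser2 :=
  fun n k => if n is n'.+1 then G n' k else 0.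

End Series.

From HB Require Import structures.
From mathcomp Require Import all_boot all_order all_algebra.
From mathcomp Require Import mpoly.
From mathcomp Require Import boolp zify.
Set Implicit Arguments. Unset Strict Implicit. Unset Printing Implicit Defensive.
Import Order.TTheory GRing.Theory Num.Theory.
Local Open Scope ring_scope.

(* Extracting the coefficient of u^h gives
   a recurrence F_{i;h} = P_{i;h} + x sum Q_{i,j,l;b} F_{j;h+l-b}, which involves
   the infinitely many unknowns F_{j;h'}, h' <= h + L.  Above a threshold T
   exceeding the u-degrees of P and Q the recurrence is homogeneous and
   translation invariant, hence F_{j;T+t} = sum_{e,j'} W_t(j,e,j') F_{j';T-1-e}
   for a kernel W_t of series independent of F, with e below the u-degree of Q;
   translation invariance also yields the composition law
   W_{s+t} = sum W_t W_{s-1-e}.  These identities close the recurrence on the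
   finitely many unknowns F_{j;h} (h < T) and W_a (a <= L): each of them equals a
   polynomial in x plus x times a polynomial with nonnegative coefficients in
   the unknowns.  Multiplication by x makes such a system contracting in the
   x-adic sense, so its power series solution is unique. *)

(** * The ring of formal power series *)

Section SeriesRing.
Variable R : realFieldType.
Local Notation ser := (ser R).

HB.instance Definition _ := gen_eqMixin ser.
HB.instance Definition _ := gen_choiceMixin ser.

Definition ser_add (f g : ser) : ser := fun n => f n + g n.
Definition ser_opp (f : ser) : ser := fun n => - f n.
Definition ser_zero : ser := fun _ => 0.

Lemma ser_addA : associative ser_add.
Proof. by move=> f g h; apply/funext => n; rewrite /ser_add addrA. Qed.

Lemma ser_addC : commutative ser_add.
Proof. by move=> f g; apply/funext => n; rewrite /ser_add addrC. Qed.

Lemma ser_add0 : left_id ser_zero ser_add.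
Proof. by move=> f; apply/funext => n; rewrite /ser_add add0r. Qed.

Lemma ser_addN : left_inverse ser_zero ser_opp ser_add.
Proof. by move=> f; apply/funext => n; rewrite /ser_add /ser_opp addNr. Qed.

HB.instance Definition _ :=
  GRing.isZmodule.Build ser ser_addA ser_addC ser_add0 ser_addN.

(* The ring laws of [ser_mul] are transferred from [{poly R}] through truncations. *)
Definition ser_agree (n : nat) (f : ser) (p : {poly R}) :=
  forall k, (k <= n)%N -> f k = p`_k.

Lemma ser_agree_trunc n (f : ser) : ser_agree n f (\poly_(i < n.+1) f i).
Proof. by move=> k hk; rewrite coef_poly ltnS hk. Qed.
Arguments ser_agree_trunc : clear implicits.

Lemma ser_agree_mul n f g p q :
  ser_agree n f p -> ser_agree n g q -> ser_agree n (ser_mul f g) (p * q).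
Proof.
move=> hf hg k hk; rewrite coefM /ser_mul; apply: eq_bigr => i _.
rewrite hf ?hg //; first exact: leq_trans (leq_subr _ _) hk.
by apply: leq_trans hk; rewrite -ltnS.
Qed.

Lemma ser_mulA : associative (@ser_mul R).
Proof.
move=> f g h; apply/funext => n.
have [[hf hg] hh] := (ser_agree_trunc n f, ser_agree_trunc n g, ser_agree_trunc n h).
rewrite (ser_agree_mul hf (ser_agree_mul hg hh)) //.
by rewrite (ser_agree_mul (ser_agree_mul hf hg) hh) // mulrA.
Qed.

Lemma ser_mulC : commutative (@ser_mul R).
Proof.
move=> f g; apply/funext => n.
have [hf hg] := (ser_agree_trunc n f, ser_agree_trunc n g).
by rewrite (ser_agree_mul hf hg) // (ser_agree_mul hg hf) // mulrC.
Qed.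

Lemma ser_mul1 : left_id (@ser_one R) (@ser_mul R).
Proof.
move=> f; apply/funext => n.
have h1 : ser_agree n (@ser_one R) 1 by move=> k _; rewrite coef1.
by rewrite (ser_agree_mul h1 (ser_agree_trunc n f)) // mul1r (ser_agree_trunc n f).
Qed.

Lemma ser_mulDl : left_distributive (@ser_mul R) ser_add.
Proof.
move=> f g h; apply/funext => n; rewrite /ser_mul /ser_add -big_split /=.
by apply: eq_bigr => i _; rewrite mulrDl.
Qed.

Lemma ser_one_neq0 : @ser_one R != ser_zero.
Proof. by apply/eqP => /(congr1 (fun f => f 0%N)) /eqP; rewrite oner_eq0. Qed.

HB.instance Definition _ := GRing.Zmodule_isComNzRing.Build ser
  ser_mulA ser_mulC ser_mul1 ser_mulDl ser_one_neq0.

Lemma serD (f g : ser) n : (f + g) n = f n + g n. Proof. by []. Qed.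
Lemma serN (f : ser) n : (- f) n = - f n. Proof. by []. Qed.
Lemma ser1 n : (1 : ser) n = (n == 0%N)%:R. Proof. by []. Qed.

Lemma ser_sumE (I : Type) (s : seq I) (P : pred I) (F : I -> ser) n :
  (\sum_(i <- s | P i) F i) n = \sum_(i <- s | P i) F i n.
Proof. exact: (big_morph (fun f : ser => f n)). Qed.

Lemma ser_XmulE (f : ser) n : (ser_X R * f) n = if n is n'.+1 then f n' else 0.
Proof.
have hX : ser_agree n (ser_X R) 'X by move=> k _; rewrite coefX.
rewrite /GRing.mul /= (ser_agree_mul hX (ser_agree_trunc n f)) // coefXM.
by case: n {hX} => // n /=; rewrite coef_poly ltnS leqnSn.
Qed.

Lemma ser_Xn a : ser_X R ^+ a = fun n => (n == a)%:R.
Proof.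
elim: a => [|a IH]; apply/funext => n; first by [].
by rewrite exprS ser_XmulE; case: n => [|n] //=; rewrite IH.
Qed.

Definition ser_of_poly (p : {poly R}) : ser := fun n => p`_n.

Lemma ser_of_poly0 : ser_of_poly 0 = 0.
Proof. by apply/funext => n; rewrite /ser_of_poly coef0. Qed.

Definition ser_C (c : R) : ser := fun n => if n == 0%N then c else 0.

Lemma ser_CmulE (c : R) (f : ser) n : (ser_C c * f) n = c * f n.
Proof.
rewrite /GRing.mul /= /ser_mul big_ord_recl /= subn0 big1 ?addr0 // => i _.
by rewrite /ser_C mul0r.
Qed.

Lemma ser_C_zmod : zmod_morphism ser_C.
Proof.
move=> a b; apply/funext => n; rewrite /ser_C serD serN.
by case: (n == 0%N); rewrite ?subr0.
Qed.

Lemma ser_C_monoid : monoid_morphism ser_C.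
Proof.
split; first by apply/funext => n; rewrite /ser_C ser1; case: (n == 0%N).
by move=> a b; apply/funext => n; rewrite ser_CmulE /ser_C; case: (n == 0%N); rewrite ?mulr0.
Qed.

HB.instance Definition _ := GRing.isZmodMorphism.Build R ser ser_C ser_C_zmod.
HB.instance Definition _ := GRing.isMonoidMorphism.Build R ser ser_C ser_C_monoid.

Lemma ser_evalE n (p : {mpoly R[n]}) (v : 'I_n -> ser) : ser_eval p v = mmap ser_C v p.
Proof.
have ser_monomE (mo : 'X_{1..n}) : ser_monom mo v = mmap1 v mo.
  rewrite /ser_monom /mmap1 -big_enum /=.
  elim: (enum _) => [|i s IH] /=; first by rewrite big_nil.
  rewrite big_cons IH; congr (_ * _).
  by elim: (mo i) => //= k ->; rewrite exprS.
apply/funext => k; rewrite /ser_eval /mmap ser_sumE; apply: eq_bigr => mo _.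
by rewrite ser_CmulE ser_monomE.
Qed.

End SeriesRing.
Arguments ser_agree_trunc {R} n f.

(** * Unique fixed points of x-contracting operators *)

Section Contraction.
Variable R : realFieldType.
Local Notation ser := (ser R).

Definition eq_upto (n : nat) (f g : ser) := forall k, (k < n)%N -> f k = g k.

Lemma eq_uptoD n f g f' g' : eq_upto n f f' -> eq_upto n g g' -> eq_upto n (f + g) (f' + g').
Proof. by move=> h1 h2 k hk; rewrite !serD h1 ?h2. Qed.

Lemma eq_uptoM n f g f' g' : eq_upto n f f' -> eq_upto n g g' -> eq_upto n (f * g) (f' * g').
Proof.
move=> hf hg k hk.
have trunc_eq (a b : ser) : eq_upto n a b -> \poly_(i < k.+1) a i = \poly_(i < k.+1) b i.
  move=> hab; apply/polyP => i; rewrite !coef_poly; case: ifP => // hi.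
  by rewrite hab //; apply: leq_trans hk.
rewrite /GRing.mul /= (ser_agree_mul (ser_agree_trunc k f) (ser_agree_trunc k g)) //.
rewrite (ser_agree_mul (ser_agree_trunc k f') (ser_agree_trunc k g')) //.
by rewrite (trunc_eq _ _ hf) (trunc_eq _ _ hg).
Qed.

Lemma eq_upto_sum n (I : Type) (s : seq I) (P : pred I) (F G : I -> ser) :
  (forall i, P i -> eq_upto n (F i) (G i)) ->
  eq_upto n (\sum_(i <- s | P i) F i) (\sum_(i <- s | P i) G i).
Proof. by move=> h; elim/big_rec2: _ => // i a b Pi hab; apply: eq_uptoD; first exact: h. Qed.

Lemma eq_upto_prod n (I : Type) (s : seq I) (P : pred I) (F G : I -> ser) :
  (forall i, P i -> eq_upto n (F i) (G i)) ->
  eq_upto n (\prod_(i <- s | P i) F i) (\prod_(i <- s | P i) G i).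
Proof. by move=> h; elim/big_rec2: _ => // i a b Pi hab; apply: eq_uptoM; first exact: h. Qed.

Lemma eq_upto_Xmul n f g : eq_upto n f g -> eq_upto n.+1 (ser_X R * f) (ser_X R * g).
Proof. by move=> h [|k] hk; rewrite !ser_XmulE //; apply: h. Qed.

Lemma eq_upto_mmap m (p : {mpoly R[m]}) (v v' : 'I_m -> ser) n :
  (forall i, eq_upto n (v i) (v' i)) -> eq_upto n (mmap (@ser_C R) v p) (mmap (@ser_C R) v' p).
Proof.
move=> h; apply: eq_upto_sum => mo _; apply: eq_uptoM => //.
apply: eq_upto_prod => i _.
by elim: (mo i) => [|e IH]; rewrite ?expr0 ?exprS //; apply: eq_uptoM.
Qed.

Definition contracting (I : Type) (Phi : (I -> ser) -> I -> ser) :=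
  forall n (y y' : I -> ser), (forall i, eq_upto n (y i) (y' i)) ->
    forall i, eq_upto n.+1 (Phi y i) (Phi y' i).

Section FixedPoint.
Variables (I : Type) (Phi : (I -> ser) -> I -> ser).
Hypothesis Phi_contracting : contracting Phi.

Lemma contracting_fix_uniq (y y' : I -> ser) :
  (forall i, Phi y i = y i) -> (forall i, Phi y' i = y' i) -> y = y'.
Proof.
move=> hy hy'.
have eq_n n i : eq_upto n (y i) (y' i).
  by elim: n i => [|n IH] i //; rewrite -hy -hy'; apply: Phi_contracting.
by apply/funext => i; apply/funext => k; apply: (eq_n k.+1 i).
Qed.

Definition fixp : I -> ser := fun i k => iter k.+1 Phi (fun _ => 0) i k.

Lemma fixpE i : Phi fixp i = fixp i.
Proof.
have iter_eq a b : (a <= b)%N -> forall i, eq_upto a (iter a Phi (fun _ => 0) i) (iter b Phi (fun _ => 0) i).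
  elim: a b => [|a IH] [|b] // hab j.
  by rewrite !iterS; apply: Phi_contracting => j'; apply: IH.
apply/funext => n; rewrite [RHS]/fixp iterS.
apply: (Phi_contracting (n := n)) (ltnSn n) => j k hk.
by rewrite /fixp (iter_eq _ _ hk).
Qed.

End FixedPoint.
End Contraction.

(** * Positive polynomial systems *)

Section NonnegMpoly.
Variables (R : realFieldType) (n : nat).

Definition mnonneg_subdef (p : {mpoly R[n]}) := all (fun m => 0 <= p@_m) (msupp p).
Definition mnonneg : qualifier 0 {mpoly R[n]} := [qualify p | mnonneg_subdef p].

Lemma mnonnegP (p : {mpoly R[n]}) : reflect (forall m, 0 <= p@_m) (p \is mnonneg).
Proof.
apply: (iffP allP) => [hp m|hp m _]; last exact: hp.
by have [/hp //|/memN_msupp_eq0 ->] := boolP (m \in msupp p).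
Qed.

Lemma mnonneg_semiring_closed : semiring_closed mnonneg.
Proof.
split; split.
- by apply/mnonnegP => m; rewrite mcoeff0.
- by move=> p q /mnonnegP hp /mnonnegP hq; apply/mnonnegP => m; rewrite mcoeffD addr_ge0.
- by apply/mnonnegP => m; rewrite mcoeff1 ler0n.
move=> p q /mnonnegP hp /mnonnegP hq; apply/mnonnegP => m.
by rewrite mcoeffM sumr_ge0 // => i _; rewrite mulr_ge0.
Qed.

HB.instance Definition _ := GRing.isSemiringClosed.Build {mpoly R[n]} mnonneg_subdef
  mnonneg_semiring_closed.

Lemma mnonnegX i : 'X_i \is mnonneg.
Proof. by apply/mnonnegP => m; rewrite mcoeffX ler0n. Qed.

Lemma mnonnegZ c p : 0 <= c -> p \is mnonneg -> c *: p \is mnonneg.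
Proof. by move=> hc /mnonnegP hp; apply/mnonnegP => m; rewrite mcoeffZ mulr_ge0. Qed.

End NonnegMpoly.
Arguments mnonneg {R n}.

Section PolyInX.
Variables (R : realFieldType) (n : nat).

Definition mpoly_x (c : {poly R}) : {mpoly R[n.+1]} := \sum_(a < size c) c`_a *: 'X_ord0 ^+ a.

Lemma mpoly_x_nonneg (c : {poly R}) : (forall a, 0 <= c`_a) -> mpoly_x c \is mnonneg.
Proof. by move=> hc; apply: rpred_sum => a _; rewrite mnonnegZ // rpredX // mnonnegX. Qed.

Lemma mmap_mpoly_x (c : {poly R}) (v : 'I_n.+1 -> ser R) :
  v ord0 = ser_X R -> mmap (@ser_C R) v (mpoly_x c) = ser_of_poly c.
Proof.
move=> v0; apply/funext => k; rewrite rmorph_sum /= ser_sumE /ser_of_poly.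
transitivity ((\sum_(a < size c) c`_a *: 'X^a)`_k); last by rewrite -poly_def coefK.
rewrite coef_sum; apply: eq_bigr => a _.
by rewrite mmapZ rmorphXn /= mmapX mmap1U v0 ser_CmulE ser_Xn coefZ coefXn.
Qed.

End PolyInX.

Section GuardedSystem.
Variables (R : realFieldType) (U : finType).
Local Notation ser := (ser R).
Local Notation m := #|U|.
Variables (c : U -> {poly R}) (G : U -> {mpoly R[m.+2]}).
Hypothesis c_nonneg : forall u a, 0 <= (c u)`_a.
Hypothesis G_nonneg : forall u, G u \is mnonneg.

Definition unknown_var (u : U) : 'I_m.+2 := lift ord0 (lift ord0 (enum_rank u)).

Definition system_eq (u : U) : {mpoly R[m.+2]} := mpoly_x m.+1 (c u) + 'X_ord0 * G u.

Lemma system_eq_nonneg u : system_eq u \is mnonneg.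
Proof. by rewrite rpredD ?rpredM ?mpoly_x_nonneg ?mnonnegX. Qed.

Lemma ser_eval_system_eq u (z : 'I_m.+1 -> ser) :
  ser_eval (system_eq u) (sys_vars z) =
  ser_of_poly (c u) + ser_X R * mmap (@ser_C R) (sys_vars z) (G u).
Proof.
have z0 : sys_vars z ord0 = ser_X R by rewrite /sys_vars unlift_none.
by rewrite ser_evalE rmorphD rmorphM /= mmapX mmap1U mmap_mpoly_x // z0.
Qed.

Lemma system_eq_contracting (Rs : 'I_m.+1 -> {mpoly R[m.+2]}) :
  (forall r, exists u, Rs r = system_eq u) ->
  contracting (fun z r => ser_eval (Rs r) (sys_vars z)).
Proof.
move=> hRs n z z' hz r; have [u ->] := hRs r; rewrite !ser_eval_system_eq.
apply: eq_uptoD => //; apply: eq_upto_Xmul; apply: eq_upto_mmap => i.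
by rewrite /sys_vars; case: unlift.
Qed.

Variables (y : U -> ser) (u0 : U).

(* Slot [0] of the unknowns duplicates [y u0], so that it is the first
   component of the grammar; the other slots list [y] along [enum U]. *)
Definition system_sol : 'I_m.+1 -> ser :=
  fun r => if unlift ord0 r is Some r' then y (enum_val r') else y u0.

Lemma sys_vars_unknown_var u : sys_vars system_sol (unknown_var u) = y u.
Proof. by rewrite /sys_vars /unknown_var liftK /system_sol liftK enum_rankK. Qed.

Hypothesis y_sol : forall u,
  y u = ser_of_poly (c u) + ser_X R * mmap (@ser_C R) (sys_vars system_sol) (G u).

Lemma finite_grammar_of_system : finite_grammar (y u0).
Proof.
pose Rs (r : 'I_m.+1) := system_eq (if unlift ord0 r is Some r' then enum_val r' else u0).
have Rs_eq r : exists u, Rs r = system_eq u by eexists.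
have sol r : system_sol r = ser_eval (Rs r) (sys_vars system_sol).
  by rewrite ser_eval_system_eq /system_sol; case: unlift => [r'|]; rewrite -y_sol.
exists m, Rs; split; first by move=> r mo; apply/mnonnegP/system_eq_nonneg.
exists system_sol; split; last by rewrite /system_sol unlift_none.
move=> y'; split=> [y'_sol|-> //].
by apply: (contracting_fix_uniq (system_eq_contracting Rs_eq)) => r; rewrite -?y'_sol -?sol.
Qed.

End GuardedSystem.

Lemma sum_ord_supp (V : nmodType) N M (f : nat -> V) :
  (forall b, (M <= b)%N -> f b = 0) ->
  \sum_(b < N) f b = \sum_(b < M) (if (b < N)%N then f b else 0).
Proof.
move=> f_supp.
rewrite (big_ord_widen (N + M) f (leq_addr _ _)) big_mkcond /=.
rewrite (big_ord_widen (N + M) (fun b => if (b < N)%N then f b else 0) (leq_addl _ _)).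
rewrite [RHS]big_mkcond /=; apply: eq_bigr => b _.
by case: ifP => hN; case: ifP => hM //; rewrite f_supp // leqNgt hM.
Qed.

(** * The catalytic system *)

Section CatalyticSystem.
Variables (R : realFieldType) (d L : nat).
Variables (P : 'I_d -> {poly {poly R}}) (Q : 'I_d -> 'I_d -> 'I_L.+1 -> {poly {poly R}}).
Variable F : 'I_d -> ser2 R.
Hypothesis F_sol : forall (i : 'I_d) (n k : nat),
  F i n k = poly2_ser (P i) n k
    + ser2_xmul (fun n' k' => \sum_(j < d) \sum_(l < L.+1)
                   ser2_mul (poly2_ser (Q i j l)) (Delta l (F j)) n' k') n k.
Local Notation ser := (ser R).
Local Notation X := (ser_X R).

Definition qsize := (\max_(t : 'I_d * 'I_d * 'I_L.+1) size (Q t.1.1 t.1.2 t.2))%N.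

Lemma Q_coef_eq0 i j l b : (qsize <= b)%N -> (Q i j l)`_b = 0.
Proof.
move=> hb; apply: nth_default; apply: leq_trans hb.
exact: (@leq_bigmax _ (fun t : 'I_d * 'I_d * 'I_L.+1 => size (Q t.1.1 t.1.2 t.2)) (i, j, l)).
Qed.

Local Notation term := ('I_d * 'I_L.+1 * 'I_qsize)%type.

Lemma sum_term (V : nmodType) (f : 'I_d -> 'I_L.+1 -> 'I_qsize -> V) :
  \sum_(S : term) (let: (j, l, b) := S in f j l b) = \sum_j \sum_l \sum_b f j l b.
Proof. by rewrite !pair_bigA; apply: eq_bigr => [[[j l] b]]. Qed.

Definition Fu (j : 'I_d) (h : nat) : ser := fun n => F j n h.
Definition Pu (i : 'I_d) (h : nat) : ser := ser_of_poly ((P i)`_h).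
Definition Qu (i j : 'I_d) (l : 'I_L.+1) (b : nat) : ser := ser_of_poly ((Q i j l)`_b).

Lemma Fu_rec i h : Fu i h = Pu i h + X * \sum_(S : term) let: (j, l, b) := S in
  if (b <= h)%N then Qu i j l b * Fu j (h + l - b) else 0.
Proof.
apply/funext => n; rewrite {1}/Fu F_sol serD ser_XmulE.
case: n => [|n]; first by rewrite /ser2_xmul addr0.
rewrite sum_term ser_sumE; congr (_ + _); apply: eq_bigr => j _.
rewrite ser_sumE; apply: eq_bigr => l _; rewrite ser_sumE /ser2_mul exchange_big /=.
rewrite (@sum_ord_supp _ _ qsize (fun b => \sum_(a < n.+1)
  poly2_ser (Q i j l) a b * Delta l (F j) (n - a)%N (h - b)%N)) => [|b hb]; last first.
  by apply: big1 => a _; rewrite /poly2_ser Q_coef_eq0 // coef0 mul0r.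
apply: eq_bigr => b _; rewrite ltnS; case: ifP => hb //.
apply: eq_bigr => a _.
by rewrite /poly2_ser /Delta /Qu /Fu /ser_of_poly addnBAC.
Qed.

Definition kdelta (Rg : pzSemiRingType) (e n : nat) (j j' : 'I_d) : Rg :=
  ((e == n) && (j == j'))%:R.

Lemma sum_kdelta (Rg : pzSemiRingType) n j0 (Z : nat -> 'I_d -> Rg) : (n < qsize)%N ->
  \sum_(e < qsize) \sum_(j < d) kdelta Rg e n j0 j * Z e j = Z n j0.
Proof.
move=> hn; rewrite (bigD1 (Ordinal hn)) //= (bigD1 j0) //= /kdelta !eqxx mul1r.
rewrite big1 ?addr0 => [|j hj]; last by rewrite eq_sym (negbTE hj) andbF mul0r.
rewrite big1 ?addr0 // => e he; apply: big1 => j _.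
suff /negbTE -> : (e : nat) != n by rewrite mul0r.
by apply: contraNneq he => en; apply/eqP/val_inj.
Qed.

(* [Y (t, j)] stands for the coefficient of [u^(T + t)] in [F_j] and
   [Z e j] for the coefficient of [u^(T - 1 - e)], for a threshold [T] above
   which the recurrence [Fu_rec] is homogeneous. *)
Definition tail_op (Z : nat -> 'I_d -> ser) (Y : nat * 'I_d -> ser) (w : nat * 'I_d) : ser :=
  let: (t, i) := w in
  X * \sum_(S : term) let: (j, l, b) := S in
    Qu i j l b * (if (t + l < b)%N then Z (b - l - t - 1)%N j else Y (t + l - b, j)%N).

Lemma tail_op_contracting Z : contracting (tail_op Z).
Proof.
move=> n Y Y' hY [t i]; apply: eq_upto_Xmul; apply: eq_upto_sum => [[[j l] b]] _.
by apply: eq_uptoM => //; case: ifP.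
Qed.

Definition kernel (e : 'I_qsize) (j' : 'I_d) : nat * 'I_d -> ser :=
  fixp (tail_op (fun n j => kdelta ser e n j j')).

Definition W (t : nat) (j : 'I_d) (e : 'I_qsize) (j' : 'I_d) : ser := kernel e j' (t, j).

Lemma W_rec t j e j' : W t j e j' = tail_op (fun n j => kdelta ser e n j j') (kernel e j') (t, j).
Proof. by rewrite /W /kernel fixpE //; apply: tail_op_contracting. Qed.

Lemma tail_op_fixE Z Y : (forall w, tail_op Z Y w = Y w) ->
  forall t j, Y (t, j) = \sum_(e < qsize) \sum_(j' < d) W t j e j' * Z e j'.
Proof.
move=> Y_fix t j.
pose Y' (w : nat * 'I_d) := \sum_(e < qsize) \sum_(j' < d) W w.1 w.2 e j' * Z e j'.
suff Y'_fix w : tail_op Z Y' w = Y' w.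
  by rewrite (contracting_fix_uniq (tail_op_contracting Z) Y_fix Y'_fix).
case: w => t' i; rewrite {2}/Y' /=; symmetry.
under eq_bigr => e _ do under eq_bigr => j' _ do rewrite W_rec /= mulr_sumr mulr_suml.
under eq_bigr => e _ do rewrite exchange_big /=.
rewrite exchange_big /= mulr_sumr; apply: eq_bigr => [[[j' l] b]] _ /=; symmetry.
transitivity (X * (Qu i j' l b * \sum_(e < qsize) \sum_(j'' < d)
   (if (t' + l < b)%N then kdelta ser e (b - l - t' - 1) j' j'' else W (t' + l - b) j' e j'') * Z e j'')).
  congr (_ * (_ * _)); case: ifP => _ //.
  by rewrite sum_kdelta //; apply: leq_ltn_trans (ltn_ord b); lia.
rewrite !mulr_sumr; apply: eq_bigr => e _; rewrite !mulr_sumr.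
by apply: eq_bigr => j'' _; rewrite !mulrA.
Qed.

Definition wstep (Rg : pzSemiRingType) (w : nat -> 'I_d -> 'I_qsize -> 'I_d -> Rg)
    (s e1 : nat) (j3 : 'I_d) (e : 'I_qsize) (j' : 'I_d) : Rg :=
  if (s <= e1)%N then kdelta Rg e (e1 - s) j3 j' else w (s - e1.+1)%N j3 e j'.

Lemma W_shift s t j e j' :
  W (s + t) j e j' = \sum_(e1 < qsize) \sum_(j3 < d) W t j e1 j3 * wstep W s e1 j3 e j'.
Proof.
apply: (tail_op_fixE (Z := fun e1 j3 => wstep W s e1 j3 e j')
  (Y := fun w => W (s + w.1) w.2 e j')) => -[t' i] /=.
rewrite [RHS]W_rec /=; congr (_ * _); apply: eq_bigr => [[[j2 l] b]] _ /=; congr (_ * _).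
rewrite /wstep; case: (ltnP (t' + l) b) => h1; last first.
  by rewrite ifF; [congr W; lia | lia].
case: (leqP s (b - l - t' - 1)) => h2.
  by rewrite ifT; [congr kdelta; lia | lia].
by rewrite ifF; [congr W; lia | lia].
Qed.

Section Threshold.
Variable T' : nat.
Local Notation T := T'.+1.
Hypothesis qsize_le_T : (qsize <= T)%N.
Hypothesis P_coef_eq0 : forall i h, (T <= h)%N -> (P i)`_h = 0.

Lemma Fu_tail t j :
  Fu j (T + t) = \sum_(e < qsize) \sum_(j' < d) W t j e j' * Fu j' (T - e.+1).
Proof.
apply: (tail_op_fixE (Z := fun e j' => Fu j' (T - e.+1))
  (Y := fun w => Fu w.2 (T + w.1))) => -[t' i] /=.
rewrite [RHS]Fu_rec.
have -> : Pu i (T + t') = 0.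
  by apply/funext => n; rewrite /Pu /ser_of_poly P_coef_eq0 ?leq_addr // coef0.
rewrite add0r; congr (_ * _); apply: eq_bigr => -[[j2 l] b] _ /=.
have b_lt := ltn_ord b.
rewrite [in RHS]ifT; last by lia.
by congr (_ * _); case: ifP => h; congr Fu; lia.
Qed.

Local Notation U := (('I_d * 'I_T) + ('I_L.+1 * 'I_d * 'I_qsize * 'I_d))%type.

(* The unknowns of the finite system: [inl (j, h)] stands for [Fu j h] with
   [h < T] and [inr (a, j, e, j')] for [W a j e j'] with [a <= L]; through
   [Fu_tail] and [W_shift], [Fread] and [Wread] reach [Fu j h] for [h <= T + L]
   and [W a] for [a <= 2 L]. *)
Section Expressions.
Variables (Rg : comNzRingType) (emb : {poly R} -> Rg) (V : U -> Rg).

Definition vF (j : 'I_d) (h : nat) : Rg := V (inl (j, inord h)).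
Definition vW (a : nat) (j : 'I_d) (e : 'I_qsize) (j' : 'I_d) : Rg := V (inr (inord a, j, e, j')).

Definition Fread (j : 'I_d) (h : nat) : Rg :=
  if (h < T)%N then vF j h
  else \sum_(e < qsize) \sum_(j' < d) vW (h - T) j e j' * vF j' (T - e.+1).

Definition Wread (a : nat) (j : 'I_d) (e : 'I_qsize) (j' : 'I_d) : Rg :=
  if (a <= L)%N then vW a j e j'
  else \sum_(e1 < qsize) \sum_(j3 < d) vW L j e1 j3 * wstep vW (a - L) e1 j3 e j'.

Definition sys_expr (u : U) : Rg :=
  match u with
  | inl (i, h) => \sum_(S : term) let: (j, l, b) := S in
      if (b <= h)%N then emb ((Q i j l)`_b) * Fread j (h + l - b) else 0
  | inr (a, i, e, j') => \sum_(S : term) let: (j, l, b) := S in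
      emb ((Q i j l)`_b) *
      (if (a + l < b)%N then kdelta Rg e (b - l - a - 1) j j' else Wread (a + l - b) j e j')
  end.

End Expressions.

Lemma sys_expr_morph (Rg1 Rg2 : comNzRingType) (phi : {rmorphism Rg1 -> Rg2})
    emb1 emb2 (V1 : U -> Rg1) (V2 : U -> Rg2) :
  (forall c, phi (emb1 c) = emb2 c) -> (forall u, phi (V1 u) = V2 u) ->
  forall u, phi (sys_expr emb1 V1 u) = sys_expr emb2 V2 u.
Proof.
move=> hemb hV.
have hkdelta e n j j' : phi (kdelta Rg1 e n j j') = kdelta Rg2 e n j j' by rewrite rmorph_nat.
have hFread j h : phi (Fread V1 j h) = Fread V2 j h.
  rewrite /Fread (fun_if phi) rmorph_sum /vF hV; congr (if _ then _ else _).
  apply: eq_bigr => e _; rewrite rmorph_sum; apply: eq_bigr => j' _.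
  by rewrite rmorphM !hV.
have hWread a j e j' : phi (Wread V1 a j e j') = Wread V2 a j e j'.
  rewrite /Wread (fun_if phi) rmorph_sum /vW hV; congr (if _ then _ else _).
  apply: eq_bigr => e1 _; rewrite rmorph_sum; apply: eq_bigr => j3 _.
  by rewrite rmorphM hV /wstep (fun_if phi) hkdelta hV.
case=> [[i h]|[[[a i] e] j']] /=; rewrite rmorph_sum; apply: eq_bigr => -[[j l] b] _ /=.
  by rewrite (fun_if phi) rmorph0 rmorphM hemb hFread.
by rewrite rmorphM hemb (fun_if phi) hkdelta hWread.
Qed.

Hypothesis Q_nonneg : forall i j l, poly2_nonneg (Q i j l).

Lemma sys_expr_closed (Rg : comNzRingType) (S : semiringClosed Rg) emb (V : U -> Rg) :
  (forall c : {poly R}, (forall n, 0 <= c`_n) -> emb c \in S) -> (forall u, V u \in S) ->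
  forall u, sys_expr emb V u \in S.
Proof.
move=> hemb hV.
have embQ i j l b : emb ((Q i j l)`_b) \in S by apply: hemb => n; apply: Q_nonneg.
have hkdelta e n j j' : kdelta Rg e n j j' \in S by apply: rpred_nat.
have hFread j h : Fread V j h \in S.
  rewrite /Fread; case: ifP => _; first exact: hV.
  apply: rpred_sum => e _; apply: rpred_sum => j' _.
  by apply: rpredM; apply: hV.
have hWread a j e j' : Wread V a j e j' \in S.
  rewrite /Wread; case: ifP => _; first exact: hV.
  apply: rpred_sum => e1 _; apply: rpred_sum => j3 _.
  by apply: rpredM; [exact: hV | rewrite /wstep; case: ifP => _; last exact: hV].
case=> [[i h]|[[[a i] e] j']] /=; apply: rpred_sum => -[[j l] b] _ /=.
  by case: ifP => _; [exact: rpredM | exact: rpred0].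
by apply: rpredM => //; case: ifP.
Qed.

Definition sys_val (u : U) : ser :=
  match u with inl (j, h) => Fu j h | inr (a, j, e, j') => W a j e j' end.

Definition sys_const (u : U) : {poly R} := if u is inl (j, h) then (P j)`_h else 0.

Lemma Fread_sys_val j h : (h <= T + L)%N -> Fread sys_val j h = Fu j h.
Proof.
move=> hh; rewrite /Fread /vF /=; case: ifP => hT; first by rewrite inordK.
rewrite [in RHS](_ : h = T + (h - T))%N ?Fu_tail; last by lia.
apply: eq_bigr => e _; apply: eq_bigr => j' _.
by rewrite /vW /vF /= !inordK //; lia.
Qed.

Lemma Wread_sys_val a j e j' : (a <= L + L)%N -> Wread sys_val a j e j' = W a j e j'.
Proof.
move=> ha; rewrite /Wread /vW /=; case: ifP => haL; first by rewrite inordK.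
rewrite [in RHS](_ : a = (a - L) + L)%N ?W_shift; last by lia.
apply: eq_bigr => e1 _; apply: eq_bigr => j3 _; rewrite inordK //; congr (_ * _).
by rewrite /wstep; case: ifP => // h; rewrite inordK //; lia.
Qed.

Lemma sys_val_sol u : sys_val u = ser_of_poly (sys_const u) + X * sys_expr (@ser_of_poly R) sys_val u.
Proof.
case: u => [[i h]|[[[a i] e] j']] /=.
  rewrite {1}Fu_rec; congr (_ + X * _); apply: eq_bigr => -[[j l] b] _ /=.
  by case: ifP => hb //; rewrite Fread_sys_val //; have := ltn_ord h; have := ltn_ord l; lia.
rewrite ser_of_poly0 add0r W_rec; congr (_ * _); apply: eq_bigr => -[[j l] b] _ /=.
by case: ifP => hb //; rewrite Wread_sys_val //; have := ltn_ord a; have := ltn_ord l; lia.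
Qed.

Hypothesis P_nonneg : forall i, poly2_nonneg (P i).

Lemma Fu_finite_grammar i k : (k < T)%N -> finite_grammar (Fu i k).
Proof.
move=> hk; have -> : Fu i k = sys_val (inl (i, inord k)) by rewrite /= inordK.
pose G u := sys_expr (mpoly_x #|{: U}|.+1) (fun v => 'X_(unknown_var v)) u.
apply: (finite_grammar_of_system (c := sys_const) (G := G)).
- by case=> [[j h]|?] a /=; rewrite ?coef0 //; apply: P_nonneg.
- move=> u; apply: sys_expr_closed => [c c_nonneg|v].
  + exact: mpoly_x_nonneg.
  + exact: mnonnegX.
- move=> u; rewrite {1}sys_val_sol; congr (_ + _ * _); symmetry; apply: sys_expr_morph.
  + by move=> c; apply: mmap_mpoly_x; rewrite /sys_vars unlift_none.
  + by move=> v /=; rewrite mmapX mmap1U sys_vars_unknown_var.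
Qed.

End Threshold.

End CatalyticSystem.

Unset Implicit Arguments.
Theorem theorem1 (R : realFieldType) (d L : nat) (hd : (0 < d)%N) (hL : (0 < L)%N)
    (P : 'I_d -> {poly {poly R}})
    (Q : 'I_d -> 'I_d -> 'I_L.+1 -> {poly {poly R}})
    (hP : forall i, poly2_nonneg (P i))
    (hQ : forall i j l, poly2_nonneg (Q i j l))
    (F : 'I_d -> ser2 R)
    (hF : forall (i : 'I_d) (n k : nat),
        F i n k =
          poly2_ser (P i) n k
          + ser2_xmul
              (fun n' k' => \sum_(j < d) \sum_(l < L.+1)
                  ser2_mul (poly2_ser (Q i j l)) (Delta l (F j)) n' k')
              n k) :
  forall (i : 'I_d) (k : nat), finite_grammar (fun n => F i n k).
Proof.
move=> i k.
pose T' := maxn (maxn (qsize Q) (\max_(j : 'I_d) size (P j))) k.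
apply: (@Fu_finite_grammar R d L P Q F hF T') => //; rewrite /T'; try lia.
move=> j h hh; apply: nth_default; apply: leq_trans (ltnW hh).
apply: leq_trans (leq_trans _ (leq_maxr (qsize Q) _)) (leq_maxl _ k).
exact: (@leq_bigmax _ (fun j => size (P j))).
Qed.
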